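(* Let $X$ be a locally compact Hausdorff topological space with a basis of compact open sets, $G$ a discrete group, $\phi=(\phi_g,X_g,X)_{g\in G}$ a partial action of $G$ on $X$ (with $X_g$ open), and $K$ a field. Then $V\mapsto C_K(V)\rtimes_{\phi|_V}G$ is a bijection between the open invariant subsets of $X$ and the graded ideals of $C_K(X)\rtimes_\phi G$.
   Context: A partial action of $G$ (identity $\varepsilon$) on a topological space $X$ is $(\phi_g,X_g,X)_{g\in G}$ with $X_g$ open, homeomorphisms $\phi_g:X_{g^{-1}}\to X_g$, and (i) $X_\varepsilon=X$, $\phi_\varepsilon=\operatorname{id}$; (ii) $\phi_g(X_{g^{-1}}\cap X_h)=X_g\cap X_{gh}$; (iii) $\phi_g\phi_h(x)=\phi_{gh}(x)$ for $x\in X_{h^{-1}}\cap X_{h^{-1}g^{-1}}$. $V\subseteq X$ is invariant if $\phi_{g^{-1}}(X_g\cap V)\subseteq X_{g^{-1}}\cap V$ for all $g$; then $\phi|_V=(\phi_g,V\cap X_g,V)$. $C_K(Y)$ is the algebra of compactly supported locally constant functions $Y\to K$; $C_K(W)$ for open $W$ is the ideal of functions vanishing off $W$; $\phi_g(f)=f\circ\phi_{g^{-1}}$. The partial skew group ring $C_K(X)\rtimes_\phi G$ consists of finite sums $\sum a_g\delta_g$, $a_g\in C_K(X_g)$, with product $(a_g\delta_g)(b_h\delta_h)=\phi_g(\phi_{g^{-1}}(a_g)b_h)\delta_{gh}$, graded by $\deg(a_g\delta_g)=g$; $C_K(V)\rtimes_{\phi|_V}G=\{\sum a_g\delta_g: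 a_g\in C_K(V\cap X_g)\}$ is viewed as a subset of it. An ideal is graded if it is the direct sum of its intersections with the homogeneous components. *)

From HB Require Import structures.
From mathcomp Require Import all_boot all_algebra.
From Stdlib Require Import ClassicalEpsilon.
From Stdlib Require List.
Set Implicit Arguments. Unset Strict Implicit. Unset Printing Implicit Defensive.
Import GRing.Theory.
Local Open Scope ring_scope.

Record topology (X : Type) := Topology {
  is_open : (X -> Prop) -> Prop;
  open_full : is_open (fun _ => True);
  open_inter : forall U V, is_open U -> is_open V -> is_open (fun x => U x /\ V x);
  open_union : forall (I : Type) (F : I -> X -> Prop),
      (forall i, is_open (F i)) -> is_open (fun x => exists i, F i x) }.

Definition compact (X : Type) (T : topology X) (C : X -> Prop) : Prop :=
  forall (I : Type) (F : I -> X -> Prop),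
    (forall i, is_open T (F i)) -> (forall x, C x -> exists i, F i x) ->
    exists s : seq I, forall x, C x -> exists i, List.In i s /\ F i x.

Definition hausdorff (X : Type) (T : topology X) : Prop :=
  forall x y, x <> y -> exists U V, is_open T U /\ is_open T V /\ U x /\ V y /\
     (forall z, U z -> V z -> False).

Definition locally_compact (X : Type) (T : topology X) : Prop :=
  forall x, exists U C, is_open T U /\ compact T C /\ U x /\ (forall y, U y -> C y).

Definition compact_open_basis (X : Type) (T : topology X) : Prop :=
  forall U x, is_open T U -> U x ->
    exists W, is_open T W /\ compact T W /\ W x /\ (forall y, W y -> U y).

(* f restricted to the open set A is a homeomorphism of A onto the open set B
   (for open A, B: subspace-open = open in X) *)
Definition homeo_between (X : Type) (T : topology X) (A B : X -> Prop) (f : X -> X) : Prop :=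
  [/\ (forall x, A x -> B (f x)),
      (forall x y, A x -> A y -> f x = f y -> x = y),
      (forall y, B y -> exists x, A x /\ f x = y),
      (forall U, is_open T U -> is_open T (fun x => A x /\ U (f x)))
    & (forall U, is_open T U -> is_open T (fun y => exists x, [/\ A x, U x & f x = y]))].

Record group_law (G : Type) := GroupLaw {
  gmul : G -> G -> G;
  ginv : G -> G;
  gunit : G;
  gmulA : forall x y z, gmul x (gmul y z) = gmul (gmul x y) z;
  gmul1 : forall x, gmul gunit x = x;
  gmulx1 : forall x, gmul x gunit = x;
  gmulV : forall x, gmul (ginv x) x = gunit;
  gmulxV : forall x, gmul x (ginv x) = gunit }.

(** * Partial actions  (phi_g, X_g, X)_g ; here X_g = D g, phi_g = phi g
    (phi g is a total function, only its values on D (g^-1) matter) *)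
Definition is_partial_action (X G : Type) (T : topology X) (gr : group_law G)
    (D : G -> X -> Prop) (phi : G -> X -> X) : Prop :=
  [/\ (forall g, is_open T (D g)),
      (forall x, D (gunit gr) x) /\ (forall x, phi (gunit gr) x = x),
      (forall g, homeo_between T (D (ginv gr g)) (D g) (phi g)),
      (forall g h y, (D g y /\ D (gmul gr g h) y) <->
                     exists x, [/\ D (ginv gr g) x, D h x & phi g x = y])
    &
      (forall g h x, D (ginv gr h) x -> D (gmul gr (ginv gr h) (ginv gr g)) x ->
                     phi g (phi h x) = phi (gmul gr g h) x)].

Definition invariant_set (X G : Type) (gr : group_law G) (D : G -> X -> Prop)
    (phi : G -> X -> X) (V : X -> Prop) : Prop :=
  forall g x, D g x -> V x ->
    D (ginv gr g) (phi (ginv gr g) x) /\ V (phi (ginv gr g) x).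

Definition locally_constant (X : Type) (T : topology X) (K : fieldType) (f : X -> K) : Prop :=
  forall x, exists U, is_open T U /\ U x /\ (forall y, U y -> f y = f x).

Definition compactly_supported (X : Type) (T : topology X) (K : fieldType) (f : X -> K) : Prop :=
  exists C, compact T C /\ (forall x, f x <> 0 -> C x).

Definition CK (X : Type) (T : topology X) (K : fieldType) (W : X -> Prop) (f : X -> K) : Prop :=
  [/\ locally_constant T f, compactly_supported T f & (forall x, ~ W x -> f x = 0)].

(** * The partial skew group ring C_K(X) ⋊_phi G.
    An element sum_g a_g δ_g is represented by a : G -> (X -> K) with finite support. *)
Definition fin_supp (G X : Type) (K : fieldType) (a : G -> X -> K) : Prop :=
  exists s : seq G, forall g, ~ List.In g s -> a g = (fun _ => 0).

Definition skew_ring (X G : Type) (T : topology X) (K : fieldType)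
    (D : G -> X -> Prop) (a : G -> X -> K) : Prop :=
  fin_supp a /\ (forall g, CK T (D g) (a g)).

(* C_K(V) ⋊_{phi|V} G viewed as a subset: a_g ∈ C_K(V ∩ X_g) *)
Definition skew_sub (X G : Type) (T : topology X) (K : fieldType)
    (D : G -> X -> Prop) (V : X -> Prop) (a : G -> X -> K) : Prop :=
  fin_supp a /\ (forall g, CK T (fun x => V x /\ D g x) (a g)).

Definition act (X G : Type) (K : fieldType) (gr : group_law G) (D : G -> X -> Prop)
    (phi : G -> X -> X) (g : G) (f : X -> K) : X -> K :=
  fun x => if excluded_middle_informative (D g x) then f (phi (ginv gr g) x) else 0.

Definition supp_list (G X : Type) (K : fieldType) (a : G -> X -> K) : seq G :=
  epsilon (inhabits [::])
    (fun s => List.NoDup s /\ forall g, ~ List.In g s -> a g = (fun _ => 0)).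

(* (a_g δ_g)(b_h δ_h) = phi_g(phi_{g^-1}(a_g) b_h) δ_{gh}, extended bilinearly *)
Definition skew_mul (X G : Type) (K : fieldType) (gr : group_law G) (D : G -> X -> Prop)
    (phi : G -> X -> X) (a b : G -> X -> K) : G -> X -> K :=
  fun k x => \sum_(g <- supp_list a)
     act gr D phi g
       (fun y => act gr D phi (ginv gr g) (a g) y * b (gmul gr (ginv gr g) k) y) x.

Definition is_ideal (X G : Type) (T : topology X) (K : fieldType) (gr : group_law G)
    (D : G -> X -> Prop) (phi : G -> X -> X) (I : (G -> X -> K) -> Prop) : Prop :=
  [/\ (forall a, I a -> skew_ring T D a),
      I (fun _ _ => 0),
      (forall a b, I a -> I b -> I (fun g x => a g x + b g x)),
      (forall a, I a -> I (fun g x => - a g x))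
    & (forall a b, skew_ring T D a -> I b ->
         I (skew_mul gr D phi a b) /\ I (skew_mul gr D phi b a))].

Definition homog (G X : Type) (K : fieldType) (a : G -> X -> K) (g : G) : G -> X -> K :=
  fun h => if excluded_middle_informative (h = g) then a h else (fun _ => 0).

(* I = ⊕_g (I ∩ (C_K(X_g) δ_g)) : every homogeneous component of an element of I lies in I *)
Definition is_graded (G X : Type) (K : fieldType) (I : (G -> X -> K) -> Prop) : Prop :=
  forall a, I a -> forall g, I (homog a g).

(* For an open invariant V, the product phi_g(phi_{g^-1}(a_g) b_h) vanishes off V as soon
   as a_g or b_h does, because invariance transports V along phi; and membership in
   C_K(V) ⋊ G is coefficientwise, so the ideal is graded.  Conversely, a graded ideal I
   determines the open set V of points where the degree-ε coefficient of some element of I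
   is nonzero.  Multiplying a_g δ_g ∈ I by 1_W δ_{g^-1} (W compact open) moves a_g to
   degree ε, which shows I ⊆ C_K(V) ⋊ G and that V is invariant.  Rescaling a locally
   constant a_ε gives 1_W δ_ε ∈ I for compact open neighbourhoods W of the points of V,
   and 1_(A ∪ B) = 1_A + 1_B - 1_A 1_B closes these under finite unions; covering the
   compact support of a_g ∈ C_K(V ∩ X_g) yields a_g δ_g = 1_W δ_ε · a_g δ_g ∈ I.
   Injectivity: V is recovered from C_K(V) ⋊ G through the indicators 1_W δ_ε, W ⊆ V. *)

From Pilot Require Import Defs.
From mathcomp Require Import all_boot all_algebra.
From Stdlib Require Import ClassicalEpsilon FunctionalExtensionality PropExtensionality Classical.
From Stdlib Require List.
Set Implicit Arguments. Unset Strict Implicit. Unset Printing Implicit Defensive.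
Import GRing.Theory.
Local Open Scope ring_scope.

Lemma set_ext (X : Type) (A B : X -> Prop) : (forall x, A x <-> B x) -> A = B.
Proof.
by move=> AB; apply: functional_extensionality => x; apply: propositional_extensionality.
Qed.

Lemma In_pmap_Some (I : Type) (i : I) (s : seq (option I)) :
  List.In (Some i) s -> List.In i (pmap id s).
Proof.
elim: s => [|[j|] s IH] //= [E|Hs]; by [left; case: E | right; apply: IH | apply: IH].
Qed.

Section Topology.
Variables (X : Type) (T : topology X).
Implicit Types (A B C S U : X -> Prop).

Lemma open_ext U V : is_open T U -> (forall x, U x <-> V x) -> is_open T V.
Proof. by move=> oU /set_ext <-. Qed.

Lemma open_locally A :
  (forall x, A x -> exists U, [/\ is_open T U, U x & forall y, U y -> A y]) -> is_open T A.
Proof.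
move=> locA.
have [F HF] : exists F : {x | A x} -> X -> Prop, forall i,
    [/\ is_open T (F i), F i (proj1_sig i) & forall y, F i y -> A y].
  exact: ClassicalEpsilon.choice _ (fun i => locA _ (proj2_sig i)).
apply: open_ext (open_union (fun i => let: And3 o _ _ := HF i in o)) _ => x.
split => [[i Fix] | Ax]; first by have [_ _] := HF i; apply.
by exists (exist _ x Ax); have [] := HF (exist _ x Ax).
Qed.

Lemma open_seq_inter (I : Type) (F : I -> X -> Prop) (s : seq I) :
  (forall i, is_open T (F i)) -> is_open T (fun x => forall i, List.In i s -> F i x).
Proof.
move=> oF; elim: s => [|i s IH]; first exact: open_ext (open_full T) _.
apply: open_ext (open_inter (oF i) IH) _ => x.
split => [[Fix Fsx] j /= [<-|] // | Fx]; first exact: Fsx.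
by split => [|j js]; apply: Fx; [left | right].
Qed.

Lemma compact0 : compact T (fun _ => False).
Proof. by move=> I F _ _; exists [::]. Qed.

Lemma compactU A B : compact T A -> compact T B -> compact T (fun x => A x \/ B x).
Proof.
move=> cA cB I F oF cover.
have [s1 H1] := cA I F oF (fun x Ax => cover x (or_introl Ax)).
have [s2 H2] := cB I F oF (fun x Bx => cover x (or_intror Bx)).
exists (s1 ++ s2) => x [/H1|/H2] [i [si Fi]];
  by exists i; split => //; apply: List.in_or_app; auto.
Qed.

Lemma compact_closed_subset C S :
  compact T C -> (forall x, S x -> C x) -> is_open T (fun x => ~ S x) -> compact T S.
Proof.
move=> cC SC oSc I F oF cover.
pose F' (o : option I) := if o is Some i then F i else (fun x => ~ S x).
have [|s Hs] := cC _ F' (fun o => if o is Some i then oF i else oSc).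
  move=> x Cx; case: (classic (S x)) => [/cover [i Fi] | nSx]; first by exists (Some i).
  by exists None.
exists (pmap id s) => x Sx; have [[i|] [si Fx]] := Hs x (SC x Sx) => //.
by exists i; split => //; apply: In_pmap_Some.
Qed.

Lemma compact_image A S (f : X -> X) :
  compact T S -> (forall y, S y -> A y) ->
  (forall U, is_open T U -> is_open T (fun y => A y /\ U (f y))) ->
  compact T (fun x => exists y, S y /\ f y = x).
Proof.
move=> cS SA contf I F oF cover.
have [|s Hs] := cS I (fun i y => A y /\ F i (f y)) (fun i => contf _ (oF i)).
  move=> y Sy; have [i Fi] := cover (f y) (ex_intro _ y (conj Sy erefl)).
  by exists i; split => //; apply: SA.
by exists s => _ [y [Sy <-]]; have [i [si [_ Fi]]] := Hs y Sy; exists i.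
Qed.

Hypothesis haus : hausdorff T.

Lemma compact_closed C x : compact T C -> ~ C x ->
  exists U, [/\ is_open T U, U x & forall y, U y -> ~ C y].
Proof.
move=> cC nCx.
have separate (i : {y | C y}) : exists UV : (X -> Prop) * (X -> Prop),
    [/\ is_open T UV.1, is_open T UV.2, UV.1 x, UV.2 (proj1_sig i)
      & forall z, UV.1 z -> UV.2 z -> False].
  case: i => y Cy /=; have [|U [V [oU [oV [Ux [Vy dUV]]]]]] := haus (x := x) (y := y).
    by move=> E; apply: nCx; rewrite E.
  by exists (U, V).
have [UV HUV] := ClassicalEpsilon.choice _ separate.
have [|s Hs] := cC _ (fun i => (UV i).2) (fun i => let: And5 _ o _ _ _ := HUV i in o).
  by move=> y Cy; exists (exist _ y Cy); have [] := HUV (exist _ y Cy).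
exists (fun z => forall i, List.In i s -> (UV i).1 z); split.
- by apply: open_seq_inter => i; have [] := HUV i.
- by move=> i _; have [] := HUV i.
- move=> y Uy /Hs [i [si Vy]]; have [_ _ _ _ dUV] := HUV i.
  exact: dUV y (Uy i si) Vy.
Qed.

End Topology.

Section LocallyConstant.
Variables (X : Type) (T : topology X) (K : fieldType).
Implicit Types (f h : X -> K) (W : X -> Prop).

Lemma locally_constant_open_preim f (P : K -> Prop) :
  locally_constant T f -> is_open T (fun y => P (f y)).
Proof.
move=> lcf; apply: open_locally => x Pfx; have [U [oU [Ux fU]]] := lcf x.
by exists U; split => // y Uy; rewrite fU.
Qed.

Lemma support_compact f : locally_constant T f -> compactly_supported T f ->
  compact T (fun y => f y <> 0).
Proof.
move=> lcf [C [cC fC]]; apply: compact_closed_subset cC fC _.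
exact: locally_constant_open_preim (fun v => ~ v <> 0) lcf.
Qed.

Lemma locally_constant_cst (r : K) : locally_constant T (fun _ => r).
Proof. by move=> x; exists (fun _ => True); split => //; exact: open_full. Qed.

Lemma locally_constant2 (op : K -> K -> K) f h :
  locally_constant T f -> locally_constant T h ->
  locally_constant T (fun x => op (f x) (h x)).
Proof.
move=> lcf lch x; have [U [oU [Ux fU]]] := lcf x; have [V [oV [Vx hV]]] := lch x.
exists (fun y => U y /\ V y); split; first exact: open_inter.
by split => // y [Uy Vy]; rewrite fU ?hV.
Qed.

Lemma compactly_supportedMr f h :
  compactly_supported T f -> compactly_supported T (fun x => f x * h x).
Proof.
by move=> [C [cC fC]]; exists C; split => // x fhx; apply: fC => fx0; rewrite fx0 mul0r in fhx.
Qed.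

Lemma CK_support W f x : CK T W f -> f x <> 0 -> W x.
Proof. by case=> _ _ fW fx; apply: NNPP => /fW. Qed.

Lemma CK_sub W1 W2 f : (forall x, W1 x -> W2 x) -> CK T W1 f -> CK T W2 f.
Proof. by move=> W12 [lcf csf fW1]; split => // x nW2x; apply: fW1 => /W12. Qed.

Lemma CK0 W : CK T W (fun _ => 0 : K).
Proof.
split => //; first exact: locally_constant_cst.
by exists (fun _ => False); split; [exact: compact0|].
Qed.

Lemma CKD W f h : CK T W f -> CK T W h -> CK T W (fun x => f x + h x).
Proof.
move=> [lcf [C1 [c1 fC1]] fW] [lch [C2 [c2 hC2]] hW]; split.
- exact: (locally_constant2 +%R).
- exists (fun x => C1 x \/ C2 x); split; first exact: compactU.
  move=> x fhx; case: (classic (f x = 0)) => [fx0|/fC1]; last by left.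
  by right; apply: hC2 => hx0; rewrite fx0 hx0 addr0 in fhx.
- by move=> x nWx; rewrite fW ?hW ?addr0.
Qed.

Lemma CKN W f : CK T W f -> CK T W (fun x => - f x).
Proof.
move=> [lcf [C [cC fC]] fW]; split.
- exact: (locally_constant2 (fun u (_ : K) => - u) lcf lcf).
- by exists C; split => // x fx; apply: fC => fx0; rewrite fx0 oppr0 in fx.
- by move=> x nWx; rewrite fW ?oppr0.
Qed.

Lemma CK_sum (I : Type) W (F : I -> X -> K) (s : seq I) :
  (forall i, List.In i s -> CK T W (F i)) -> CK T W (fun x => \sum_(i <- s) F i x).
Proof.
elim: s => [|i s IH] CKF.
  by under [fun x => _]functional_extensionality => x do rewrite big_nil; exact: CK0.
under [fun x => _]functional_extensionality => x do rewrite big_cons.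
by apply: CKD; [apply: CKF; left | apply: IH => j js; apply: CKF; right].
Qed.

Definition indicator W (r : K) : X -> K :=
  fun x => if excluded_middle_informative (W x) then r else 0.

Lemma indicator_in W r x : W x -> indicator W r x = r.
Proof. by rewrite /indicator; case: excluded_middle_informative. Qed.

Lemma indicator_out W r x : ~ W x -> indicator W r x = 0.
Proof. by rewrite /indicator; case: excluded_middle_informative. Qed.

Hypothesis haus : hausdorff T.

Lemma CK_indicator W r : is_open T W -> compact T W -> CK T W (indicator W r).
Proof.
move=> oW cW; split.
- move=> x; case: (classic (W x)) => Wx.
    by exists W; split => //; split => // y Wy; rewrite !indicator_in.
  have [U [oU Ux UnW]] := compact_closed haus cW Wx.
  by exists U; split => //; split => // y /UnW Wy; rewrite !indicator_out.
- by exists W; split => // x rx; apply: NNPP => /(indicator_out r).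
- by move=> x /indicator_out.
Qed.

End LocallyConstant.

Section GroupLaw.
Variables (G : Type) (gr : group_law G).
Local Notation "x * y" := (gmul gr x y).
Local Notation inv := (ginv gr).

Lemma ginvK g : inv (inv g) = g.
Proof. by rewrite -[inv (inv g)](gmulx1 gr) -(gmulV gr g) gmulA gmulV gmul1. Qed.

Lemma ginv1 : inv (gunit gr) = gunit gr.
Proof. by rewrite -[inv _](gmul1 gr) gmulxV. Qed.

Lemma gmulKVg g h : g * (inv g * h) = h.
Proof. by rewrite gmulA gmulxV gmul1. Qed.

End GroupLaw.

Section PartialAction.
Variables (X : Type) (T : topology X) (G : Type) (gr : group_law G)
  (D : G -> X -> Prop) (phi : G -> X -> X) (K : fieldType).
Hypothesis pa : is_partial_action T gr D phi.
Local Notation e := (gunit gr).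
Local Notation inv := (ginv gr).
Local Notation act := (act gr D phi).

Lemma dom_open g : is_open T (D g).
Proof. by case: pa. Qed.

Lemma dom1 x : D e x.
Proof. by case: pa => _ []. Qed.

Lemma phi1 x : phi e x = x.
Proof. by case: pa => _ []. Qed.

Lemma phi_dom g x : D (inv g) x -> D g (phi g x).
Proof. by case: pa => _ _ homeo _ _; case: (homeo g) => + _ _ _ _; apply. Qed.

Lemma phi_cont g U : is_open T U -> is_open T (fun x => D (inv g) x /\ U (phi g x)).
Proof. by case: pa => _ _ homeo _ _; case: (homeo g) => _ _ _ + _; apply. Qed.

Lemma phi_domV g x : D g x -> D (inv g) (phi (inv g) x).
Proof. by move=> Dgx; apply: phi_dom; rewrite ginvK. Qed.

Lemma phiK g x : D g x -> phi g (phi (inv g) x) = x.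
Proof.
move=> Dgx; case: pa => _ _ _ _ phiM.
by rewrite phiM ?ginvK ?gmulxV ?phi1 //; exact: dom1.
Qed.

Lemma phiVK g x : D (inv g) x -> phi (inv g) (phi g x) = x.
Proof. by move/phiK; rewrite ginvK. Qed.

Lemma phi_domM g h x : D (inv g) x -> D h x -> D (gmul gr g h) (phi g x).
Proof.
case: pa => _ _ _ domM _ Dx Dhx.
by have [] := proj2 (domM g h (phi g x)) (ex_intro _ x (And3 Dx Dhx erefl)).
Qed.

Lemma act_in g (f : X -> K) x : D g x -> act g f x = f (phi (inv g) x).
Proof. by rewrite /Defs.act; case: excluded_middle_informative. Qed.

Lemma act_out g (f : X -> K) x : ~ D g x -> act g f x = 0.
Proof. by rewrite /Defs.act; case: excluded_middle_informative. Qed.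

Lemma act_eq0 g (f : X -> K) x : (forall y, f y = 0) -> act g f x = 0.
Proof. by move=> f0; case: (classic (D g x)) => Dgx; [rewrite act_in | rewrite act_out]. Qed.

Lemma act1 (f : X -> K) x : act e f x = f x.
Proof. by rewrite act_in ?ginv1 ?phi1 //; exact: dom1. Qed.

Lemma act_support g (f : X -> K) x : act g f x <> 0 -> D g x /\ f (phi (inv g) x) <> 0.
Proof. by rewrite /Defs.act; case: excluded_middle_informative. Qed.

Section ActCK.
Variables (g : G) (f : X -> K).
Hypotheses (lcf : locally_constant T f) (csf : compactly_supported T f)
  (fD : forall y, f y <> 0 -> D (inv g) y).

Lemma act_support_image x : act g f x <> 0 -> exists y, f y <> 0 /\ phi g y = x.
Proof. by move=> /act_support [Dgx fx]; exists (phi (inv g) x); rewrite phiK. Qed.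

Lemma act_compact_support : compact T (fun x => exists y, f y <> 0 /\ phi g y = x).
Proof. exact: compact_image (support_compact lcf csf) fD (@phi_cont g). Qed.

Lemma act_compactly_supported : compactly_supported T (act g f).
Proof.
exists (fun x => exists y, f y <> 0 /\ phi g y = x).
by split; [exact: act_compact_support | exact: act_support_image].
Qed.

Hypothesis haus : hausdorff T.

Lemma act_locally_constant : locally_constant T (act g f).
Proof.
move=> x; case: (classic (D g x)) => Dgx.
  have [U [oU [Ux fU]]] := lcf (phi (inv g) x).
  exists (fun z => D (inv (inv g)) z /\ U (phi (inv g) z)); split; first exact: phi_cont.
  rewrite ginvK; split => // z [Dgz Uz].
  by rewrite !act_in // fU.
have [|U [oU Ux Uout]] := compact_closed haus act_compact_support (x := x).
  by case=> y [fy Ey]; apply: Dgx; rewrite -Ey; apply/phi_dom/fD.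
exists U; split => //; split => // z Uz; rewrite (act_out f Dgx).
by apply: NNPP => fz; exact: Uout z Uz (act_support_image fz).
Qed.

End ActCK.

End PartialAction.

Lemma big_In_eq0 (I : Type) (V : nmodType) (F : I -> V) (s : seq I) :
  (forall i, List.In i s -> F i = 0) -> \sum_(i <- s) F i = 0.
Proof.
elim: s => [|i s IH] F0; first by rewrite big_nil.
by rewrite big_cons F0 ?add0r; [apply: IH => j js; apply: F0; right | left].
Qed.

Lemma big_In_single (I : Type) (V : nmodType) (F : I -> V) (s : seq I) i :
  List.NoDup s -> (forall j, j <> i -> F j = 0) -> (~ List.In i s -> F i = 0) ->
  \sum_(j <- s) F j = F i.
Proof.
elim: s => [|j s IH] uniqs Fi0 Fi_notin; first by rewrite big_nil Fi_notin.
move/List.NoDup_cons_iff: uniqs => [js uniqs]; rewrite big_cons.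
case: (classic (j = i)) => ji; first subst j.
  by rewrite big_In_eq0 ?addr0 // => l ls; apply: Fi0 => lj; apply: js; rewrite -lj.
by rewrite Fi0 // add0r IH // => nis; apply: Fi_notin => -[|]; [exact: ji | exact: nis].
Qed.

Lemma supp_listP (G X : Type) (K : fieldType) (a : G -> X -> K) : fin_supp a ->
  List.NoDup (supp_list a) /\ forall g, ~ List.In g (supp_list a) -> a g = (fun _ => 0).
Proof.
move=> [s as0]; pose dec (g h : G) := excluded_middle_informative (g = h).
apply: (epsilon_spec _
  (fun s => List.NoDup s /\ forall g, ~ List.In g s -> a g = (fun _ => 0))).
exists (List.nodup dec s).
by split => [|g /List.nodup_In]; [exact: List.NoDup_nodup | exact: as0].
Qed.

Section SkewProduct.
Variables (X : Type) (T : topology X) (G : Type) (gr : group_law G)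
  (D : G -> X -> Prop) (phi : G -> X -> X) (K : fieldType).
Hypothesis haus : hausdorff T.
Hypothesis pa : is_partial_action T gr D phi.
Local Notation inv := (ginv gr).
Local Notation act := (act gr D phi).

Definition skew_term (a b : G -> X -> K) g k : X -> K :=
  act g (fun y => act (inv g) (a g) y * b (gmul gr (inv g) k) y).

Lemma skew_mulE a b k x :
  skew_mul gr D phi a b k x = \sum_(g <- supp_list a) skew_term a b g k x.
Proof. by []. Qed.

Section SkewTerm.
Variables (V1 V2 : X -> Prop) (a b : G -> X -> K) (g k : G).
Hypotheses (V1inv : invariant_set gr D phi V1) (V2inv : invariant_set gr D phi V2).
Hypothesis CKa : CK T (fun x => V1 x /\ D g x) (a g).
Hypothesis CKb : CK T (fun x => V2 x /\ D (gmul gr (inv g) k) x) (b (gmul gr (inv g) k)).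

Lemma skew_term_inner_support y :
  act (inv g) (a g) y * b (gmul gr (inv g) k) y <> 0 ->
  [/\ D (inv g) y, V1 y, V2 y & D (gmul gr (inv g) k) y].
Proof.
move=> aby.
have ay : act (inv g) (a g) y <> 0 by move=> a0; rewrite a0 mul0r in aby.
have by0 : b (gmul gr (inv g) k) y <> 0 by move=> b0; rewrite b0 mulr0 in aby.
have [Dy] := act_support ay; rewrite ginvK => /(CK_support CKa) [V1gy Dgy].
have [V2y Dhy] := CK_support CKb by0.
split => //; have [_] := V1inv Dgy V1gy.
by rewrite (phiVK pa).
Qed.

(* Invariance carries [V1], [V2] from [y] to [x = phi g y], and (ii) gives [D k x]. *)
Lemma skew_term_support x : skew_term a b g k x <> 0 -> (V1 x /\ V2 x) /\ D k x.
Proof.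
move=> tx; have [Dgx /skew_term_inner_support [Dy V1y V2y Dhy]] := act_support tx.
have [[_ V1x] [_ V2x]] := (V1inv Dy V1y, V2inv Dy V2y).
rewrite ginvK (phiK pa) // in V1x V2x; split => //.
by have := phi_domM pa Dy Dhy; rewrite gmulKVg (phiK pa).
Qed.

Lemma skew_term_CK : CK T (fun x => (V1 x /\ V2 x) /\ D k x) (skew_term a b g k).
Proof.
have [lca csa _] := CKa; have [lcb _ _] := CKb.
have aD y : a g y <> 0 -> D (inv (inv g)) y by rewrite ginvK => /(CK_support CKa) [].
pose f y := act (inv g) (a g) y * b (gmul gr (inv g) k) y.
have lcf : locally_constant T f.
  exact: (locally_constant2 *%R (act_locally_constant pa lca csa aD haus) lcb).
have csf : compactly_supported T f.
  exact: compactly_supportedMr (act_compactly_supported pa lca csa aD).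
have fD y : f y <> 0 -> D (inv g) y by case/skew_term_inner_support.
split; last by move=> x nVx; apply: NNPP => /skew_term_support.
- exact: (act_locally_constant pa lcf csf fD haus).
- exact: (act_compactly_supported pa lcf csf fD).
Qed.

End SkewTerm.

Lemma skew_mul_sub V1 V2 (a b : G -> X -> K) :
  invariant_set gr D phi V1 -> invariant_set gr D phi V2 ->
  skew_sub T D V1 a -> skew_sub T D V2 b ->
  skew_sub T D (fun x => V1 x /\ V2 x) (skew_mul gr D phi a b).
Proof.
move=> V1inv V2inv [fsa CKa] [[sb b0] CKb]; split => [|k]; last first.
  by apply: CK_sum => g _; apply: skew_term_CK.
exists (List.flat_map (fun g => List.map (gmul gr g) sb) (supp_list a)) => k kns.
apply: functional_extensionality => x; rewrite skew_mulE big_In_eq0 // => g ga.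
apply: act_eq0 => y; rewrite b0 ?mulr0 // => hsb; apply: kns.
apply/List.in_flat_map; exists g; split => //.
by apply/List.in_map_iff; exists (gmul gr (inv g) k); rewrite gmulKVg.
Qed.

End SkewProduct.

Section SkewIdeals.
Variables (X : Type) (T : topology X) (G : Type) (gr : group_law G)
  (D : G -> X -> Prop) (phi : G -> X -> X) (K : fieldType).
Hypothesis haus : hausdorff T.
Hypothesis pa : is_partial_action T gr D phi.
Local Notation e := (gunit gr).
Local Notation inv := (ginv gr).
Local Notation act := (act gr D phi).
Local Notation skew_mul := (skew_mul gr D phi).

Definition single (g : G) (f : X -> K) : G -> X -> K :=
  fun h => if excluded_middle_informative (h = g) then f else (fun _ => 0).

Lemma single_eq g f : single g f g = f.
Proof. by rewrite /single; case: excluded_middle_informative. Qed.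

Lemma single_ne g f h : h <> g -> single g f h = (fun _ => 0).
Proof. by rewrite /single; case: excluded_middle_informative. Qed.

Lemma homog_single (a : G -> X -> K) g : homog a g = single g (a g).
Proof.
apply: functional_extensionality => h; rewrite /homog /single.
by case: excluded_middle_informative => // hg; subst h.
Qed.

Lemma fin_supp_single g f : fin_supp (single g f).
Proof. by exists [:: g] => h hg; apply: single_ne => hg'; apply: hg; left. Qed.

Lemma skew_sub_single V g f : CK T (fun x => V x /\ D g x) f -> skew_sub T D V (single g f).
Proof.
move=> CKf; split => [|h]; first exact: fin_supp_single.
by case: (classic (h = g)) => [->|hg]; rewrite ?single_eq ?single_ne //; exact: CK0.
Qed.

Lemma skew_sub_homog V (a : G -> X -> K) g : skew_sub T D V a -> skew_sub T D V (homog a g).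
Proof. by case=> _ CKa; rewrite homog_single; apply: skew_sub_single. Qed.

Lemma skew_sub_ring V (a : G -> X -> K) : skew_sub T D V a -> skew_ring T D a.
Proof. by case=> fsa CKa; split => // g; apply: CK_sub (CKa g) => x []. Qed.

Lemma skew_ring_subT (a : G -> X -> K) : skew_ring T D a -> skew_sub T D (fun _ => True) a.
Proof. by case=> fsa CKa; split => // g; apply: CK_sub (CKa g). Qed.

Lemma skew_sub_indicator V g W r :
  is_open T W -> compact T W -> (forall x, W x -> V x /\ D g x) ->
  skew_sub T D V (single g (indicator W r)).
Proof. by move=> oW cW WVD; apply/skew_sub_single/(CK_sub WVD)/CK_indicator. Qed.

Lemma skew_mul_single g f (b : G -> X -> K) k x :
  skew_mul (single g f) b k x =
  act g (fun y => act (inv g) f y * b (gmul gr (inv g) k) y) x.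
Proof.
have [uniq_supp supp0] := supp_listP (fin_supp_single g f).
have term0 h : single g f h = (fun _ => 0) -> skew_term gr D phi (single g f) b h k x = 0.
  by move=> f0; apply: act_eq0 => y; rewrite f0 act_eq0 ?mul0r.
rewrite skew_mulE (big_In_single (i := g)) //.
- by rewrite /skew_term single_eq.
- by move=> h hg; rewrite term0 ?single_ne.
- by move=> gn; rewrite term0 ?supp0.
Qed.

Lemma skew_mul_single1 f (b : G -> X -> K) k x :
  skew_mul (single e f) b k x = f x * b k x.
Proof. by rewrite skew_mul_single (act1 pa) ginv1 gmul1 (act1 pa). Qed.

Lemma invariant_setT : invariant_set gr D phi (fun _ => True).
Proof. by move=> g x Dgx _; split => //; exact: (phi_domV pa Dgx). Qed.

Lemma skew_sub_subset V1 V2 (a : G -> X -> K) :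
  (forall x, V1 x -> V2 x) -> skew_sub T D V1 a -> skew_sub T D V2 a.
Proof. by move=> V12 [fsa CKa]; split => // g; apply: CK_sub (CKa g) => x [/V12]. Qed.

Lemma skew_sub0 V : skew_sub T D V (fun _ _ => 0 : K).
Proof. by split => [|g]; [exists [::] | exact: CK0]. Qed.

Lemma skew_subD V (a b : G -> X -> K) : skew_sub T D V a -> skew_sub T D V b ->
  skew_sub T D V (fun g x => a g x + b g x).
Proof.
move=> [[sa a0] CKa] [[sb b0] CKb]; split => [|g]; last exact: CKD.
exists (sa ++ sb) => g gs; apply: functional_extensionality => x.
by rewrite a0 ?b0 ?addr0 // => gs'; apply: gs; apply: List.in_or_app; auto.
Qed.

Lemma skew_subN V (a : G -> X -> K) : skew_sub T D V a -> skew_sub T D V (fun g x => - a g x).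
Proof.
move=> [[sa a0] CKa]; split => [|g]; last exact: CKN.
by exists sa => g gs; apply: functional_extensionality => x; rewrite a0 ?oppr0.
Qed.

Lemma skew_sub_ideal V : invariant_set gr D phi V ->
  is_ideal T gr D phi (fun a : G -> X -> K => skew_sub T D V a).
Proof.
move=> Vinv; split.
- exact: skew_sub_ring.
- exact: skew_sub0.
- exact: skew_subD.
- exact: skew_subN.
move=> a b /skew_ring_subT a_ring bV; split.
- by apply: skew_sub_subset (skew_mul_sub haus pa invariant_setT Vinv a_ring bV) => x [].
- by apply: skew_sub_subset (skew_mul_sub haus pa Vinv invariant_setT bV a_ring) => x [].
Qed.

Lemma skew_sub_graded V : is_graded (fun a : G -> X -> K => skew_sub T D V a).
Proof. by move=> a aV g; apply: skew_sub_homog. Qed.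

Hypothesis basis : compact_open_basis T.

Lemma skew_sub_reflect V1 V2 : is_open T V1 ->
  (forall a : G -> X -> K, skew_sub T D V1 a -> skew_sub T D V2 a) ->
  forall x, V1 x -> V2 x.
Proof.
move=> oV1 V12 x V1x; have [W [oW [cW [Wx WV1]]]] := basis oV1 V1x.
have /V12 [_ /(_ e) CK2] : skew_sub T D V1 (single e (indicator W (1 : K))).
  by apply: skew_sub_indicator oW cW _ => y Wy; split; [exact: WV1 | exact: dom1 pa y].
have [] // := CK_support (x := x) CK2.
by rewrite single_eq indicator_in //; apply/eqP; exact: oner_neq0.
Qed.

Lemma skew_ring_indicator g W (r : K) : is_open T W -> compact T W ->
  (forall x, W x -> D g x) -> skew_ring T D (single g (indicator W r)).
Proof.
move=> oW cW WD; apply: (@skew_sub_ring (fun _ => True)).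
by apply: skew_sub_indicator oW cW _ => x /WD.
Qed.

Section GradedIdeal.
Variable I : (G -> X -> K) -> Prop.
Hypotheses (idealI : is_ideal T gr D phi I) (gradedI : is_graded I).

Lemma ideal_ring a : I a -> skew_ring T D a.
Proof. by case: idealI => + _ _ _ _; apply. Qed.

Lemma ideal_mull a b : skew_ring T D a -> I b -> I (skew_mul a b).
Proof. by move=> ar Ib; case: idealI => _ _ _ _ /(_ a b ar Ib) []. Qed.

Lemma ideal_mulr a b : skew_ring T D a -> I b -> I (skew_mul b a).
Proof. by move=> ar Ib; case: idealI => _ _ _ _ /(_ a b ar Ib) []. Qed.

Lemma ideal_single a g : I a -> I (single g (a g)).
Proof. by move=> /gradedI /(_ g); rewrite homog_single. Qed.

Lemma ideal_ext a b : I a -> (forall g x, a g x = b g x) -> I b.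
Proof.
move=> Ia ab; suff <- : a = b by [].
by apply: functional_extensionality => g; apply: functional_extensionality.
Qed.

Lemma ideal_sum (F : G -> G -> X -> K) (s : seq G) :
  (forall g, List.In g s -> I (F g)) -> I (fun h x => \sum_(g <- s) F g h x).
Proof.
case: idealI => _ I0 ID _ _; elim: s => [|g s IH] IF.
  by apply: ideal_ext I0 _ => h x; rewrite big_nil.
have IFs : I (fun h x => \sum_(j <- s) F j h x) by apply: IH => j js; apply: IF; right.
by apply: ideal_ext (ID _ _ (IF g (or_introl erefl)) IFs) _ => h x; rewrite big_cons.
Qed.

Definition ideal_support : X -> Prop := fun x => exists a, I a /\ a e x <> 0.

Lemma ideal_support_open : is_open T ideal_support.
Proof.
apply: open_locally => x [a [Ia ax]].
have [_ /(_ e) [lca _ _]] := ideal_ring Ia; have [U [oU [Ux aU]]] := lca x.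
by exists U; split => // y Uy; exists a; rewrite aU.
Qed.

(* Multiplying [a_g δ_g] on the right by [1_W δ_{g^-1}] moves it to degree [e]. *)
Lemma ideal_coef_support a g x : I a -> a g x <> 0 -> ideal_support x.
Proof.
move=> Ia agx; have [_ /(_ g) CKa] := ideal_ring Ia; have Dgx := CK_support CKa agx.
have Dy := phi_domV pa Dgx; have [W [oW [cW [Wy WD]]]] := basis (dom_open pa (inv g)) Dy.
exists (skew_mul (single g (a g)) (single (inv g) (indicator W 1))); split.
  by apply: ideal_mulr (ideal_single _ Ia); exact: skew_ring_indicator.
rewrite skew_mul_single gmulx1 single_eq act_in // act_in // indicator_in // mulr1.
by rewrite ginvK (phiK pa).
Qed.

Lemma ideal_support_invariant : invariant_set gr D phi ideal_support.
Proof.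
move=> g x Dgx [b [Ib bx]]; have Dy := phi_domV pa Dgx; split => //.
have [W [oW [cW [Wy WD]]]] := basis (dom_open pa (inv g)) Dy.
apply: (@ideal_coef_support (skew_mul (single (inv g) (indicator W 1)) b) (inv g)).
  by apply: ideal_mull Ib; exact: skew_ring_indicator.
rewrite skew_mul_single act_in // ginvK gmulxV (phiK pa) // act_in //.
by rewrite indicator_in // mul1r.
Qed.

Lemma ideal_skew_sub a : I a -> skew_sub T D ideal_support a.
Proof.
move=> Ia; have [fsa CKa] := ideal_ring Ia; split => // g.
have [lca csa _] := CKa g; split => // x nVx; apply: NNPP => agx; apply: nVx.
by split; [exact: ideal_coef_support Ia agx | exact: CK_support (CKa g) agx].
Qed.

Lemma ideal_indicator_nbhd x : ideal_support x ->
  exists W, [/\ is_open T W, compact T W, W x & I (single e (indicator W 1))].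
Proof.
move=> [b [Ib bx]]; have [_ /(_ e) [lcb _ _]] := ideal_ring Ib.
have [U [oU [Ux bU]]] := lcb x; have [W [oW [cW [Wx WU]]]] := basis oU Ux.
exists W; split => //.
have ring_c := skew_ring_indicator (b e x)^-1 oW cW (fun y _ => dom1 pa y).
apply: ideal_ext (ideal_mull ring_c (ideal_single e Ib)) _ => k z.
rewrite skew_mul_single1; case: (classic (k = e)) => [->|ke]; last first.
  by rewrite !single_ne // mulr0.
rewrite !single_eq; case: (classic (W z)) => Wz; last by rewrite !indicator_out ?mul0r.
by rewrite !indicator_in // (bU z (WU z Wz)) mulVf //; apply/eqP.
Qed.

Lemma ideal_indicator0 : I (single e (indicator (fun _ => False) 1)).
Proof.
case: idealI => _ I0 _ _ _; apply: ideal_ext I0 _ => k z.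
by case: (classic (k = e)) => [->|ke]; rewrite ?single_eq ?indicator_out ?single_ne.
Qed.

(* [1_(A u B) = 1_A + 1_B - 1_A 1_B] *)
Lemma ideal_indicatorU A B :
  I (single e (indicator A 1)) -> I (single e (indicator B 1)) ->
  I (single e (indicator (fun x => A x \/ B x) 1)).
Proof.
case: idealI => ringI _ ID IN _ IA IB; have IAB := ideal_mull (ringI _ IA) IB.
apply: ideal_ext (ID _ _ (ID _ _ IA IB) (IN _ IAB)) _ => k z.
rewrite skew_mul_single1; case: (classic (k = e)) => [->|ke]; last first.
  by rewrite !single_ne // mulr0 oppr0 !addr0.
rewrite !single_eq; set AB := fun x => A x \/ B x.
case: (classic (A z)) => Az; case: (classic (B z)) => Bz.
- have ABz : AB z by left.
  by rewrite !(indicator_in 1 Az, indicator_in 1 Bz, indicator_in 1 ABz) mulr1 addrK.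
- have ABz : AB z by left.
  rewrite !(indicator_in 1 Az, indicator_out 1 Bz, indicator_in 1 ABz).
  by rewrite mulr0 oppr0 !addr0.
- have ABz : AB z by right.
  rewrite !(indicator_out 1 Az, indicator_in 1 Bz, indicator_in 1 ABz).
  by rewrite mul0r oppr0 addr0 add0r.
- have nABz : ~ AB z by case.
  rewrite !(indicator_out 1 Az, indicator_out 1 Bz, indicator_out 1 nABz).
  by rewrite mul0r oppr0 !addr0.
Qed.

Lemma ideal_indicator_bigU (J : Type) (W : J -> X -> Prop) (s : seq J) :
  (forall j, List.In j s -> I (single e (indicator (W j) 1))) ->
  I (single e (indicator (fun x => exists j, List.In j s /\ W j x) 1)).
Proof.
elim: s => [|j s IH] IW.
  rewrite (_ : (fun x => _) = fun _ => False); first exact: ideal_indicator0.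
  by apply: set_ext => x; split => // -[i []].
rewrite (_ : (fun x => _) = fun x => W j x \/ exists i, List.In i s /\ W i x).
  by apply: ideal_indicatorU; [apply: IW; left | apply: IH => i si; apply: IW; right].
apply: set_ext => x; split => [[i [[<-|si] Wi]] | [Wj | [i [si Wi]]]].
- by left.
- by right; exists i.
- by exists j; split => //; left.
- by exists i; split => //; right.
Qed.

(* Cover the compact support of [a_g] by finitely many neighbourhoods from
   [ideal_indicator_nbhd]: the indicator of their union is a left unit for [a_g δ_g]. *)
Lemma skew_sub_homog_ideal a g : skew_sub T D ideal_support a -> I (homog a g).
Proof.
move=> aV; have [_ /(_ g) CKa] := aV; have [lca csa _] := CKa.
have nbhd (i : {x | a g x <> 0}) : exists W,
    [/\ is_open T W, compact T W, W (proj1_sig i) & I (single e (indicator W 1))].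
  by case: i => x agx; apply: ideal_indicator_nbhd; case: (CK_support CKa agx).
have [Wf HW] := ClassicalEpsilon.choice _ nbhd.
have [|s cover] := support_compact lca csa (fun i => let: And4 o _ _ _ := HW i in o).
  by move=> x agx; exists (exist _ x agx); have [] := HW (exist _ x agx).
have Icover := ideal_indicator_bigU (s := s) (fun i _ => let: And4 _ _ _ p := HW i in p).
have ag_ring : skew_ring T D (homog a g) by apply/skew_sub_ring/skew_sub_homog/aV.
apply: ideal_ext (ideal_mulr ag_ring Icover) _ => k z.
rewrite skew_mul_single1; case: (classic (homog a g k z = 0)) => [->|agz]; first by rewrite mulr0.
rewrite indicator_in ?mul1r //; apply: cover.
move: agz; rewrite homog_single.
by case: (classic (k = g)) => [->|kg]; rewrite ?single_eq ?single_ne.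
Qed.

Lemma skew_sub_ideal_support a : skew_sub T D ideal_support a -> I a.
Proof.
move=> aV; have [fsa _] := aV; have [uniq_supp supp0] := supp_listP fsa.
have Ihomog g : List.In g (supp_list a) -> I (homog a g) by move=> _; exact: skew_sub_homog_ideal.
apply: ideal_ext (ideal_sum Ihomog) _ => k z /=.
rewrite (big_In_single (i := k)) //.
- by rewrite homog_single single_eq.
- by move=> g gk; rewrite homog_single single_ne // => kg; apply: gk.
- by move=> ks; rewrite homog_single single_eq supp0.
Qed.

End GradedIdeal.

End SkewIdeals.

Theorem mainTheorem10 (X : Type) (T : topology X) (G : Type) (gr : group_law G)
    (D : G -> X -> Prop) (phi : G -> X -> X) (K : fieldType) :
  locally_compact T -> hausdorff T -> compact_open_basis T ->
  is_partial_action T gr D phi ->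
  [/\ (forall V : X -> Prop, is_open T V -> invariant_set gr D phi V ->
         is_ideal T gr D phi (fun a : G -> X -> K => skew_sub T D V a) /\
         is_graded (fun a : G -> X -> K => skew_sub T D V a)),
      (forall V1 V2 : X -> Prop,
         is_open T V1 -> invariant_set gr D phi V1 ->
         is_open T V2 -> invariant_set gr D phi V2 ->
         (forall a : G -> X -> K, skew_sub T D V1 a <-> skew_sub T D V2 a) ->
         forall x, V1 x <-> V2 x)
    & (forall I : (G -> X -> K) -> Prop, is_ideal T gr D phi I -> is_graded I ->
         exists V : X -> Prop, [/\ is_open T V, invariant_set gr D phi V &
           forall a, I a <-> skew_sub T D V a])].
Proof.
move=> _ haus basis pa; split.
- move=> V _ Vinv; split; [exact: (skew_sub_ideal K haus pa Vinv) | exact: skew_sub_graded].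
- move=> V1 V2 oV1 _ oV2 _ V12 x; split.
    by apply: (skew_sub_reflect haus pa basis oV1) => a /V12.
  by apply: (skew_sub_reflect haus pa basis oV2) => a /V12.
- move=> I idealI gradedI; exists (ideal_support gr I); split.
  + exact: (ideal_support_open idealI).
  + exact: (ideal_support_invariant haus pa basis idealI gradedI).
  + move=> a; split; first exact: (ideal_skew_sub haus pa basis idealI gradedI).
    exact: (skew_sub_ideal_support haus pa basis idealI gradedI).
Qed.
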